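(* Let $G$ be a complete multipartite digraph with the parity property, and let $A,B$ be two distinct maximal antichains of $G$. Then there exist subsets $R_{AB}\subseteq A$ and $S_{AB}\subseteq B$ such that for all $x\in A$ and $y\in B$: $x\to y$ if and only if ($x\in R_{AB}\iff y\in S_{AB}$).
   Context: A digraph is a set with an irreflexive binary relation $\to$ such that $x\to y$ and $y\to x$ never both hold; write $x\perp y$ if neither $x\to y$ nor $y\to x$ (with $x\perp x$). A digraph is complete multipartite if $\perp$ is an equivalence relation; its maximal antichains are the $\perp$-classes, and any two points in different classes are joined by an edge in exactly one direction. The digraph has the parity property if for every two distinct maximal antichains $A,B$, every distinct $a,a'\in A$ and every distinct $b,b'\in B$, the number of edges pointing from a vertex of $\{a,a'\}$ to a vertex of $\{b,b'\}$ is even. *)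

From Stdlib Require Import Classical ClassicalEpsilon Arith.

Definition is_digraph {T : Type} (arr : T -> T -> Prop) : Prop :=
  (forall x, ~ arr x x) /\ (forall x y, arr x y -> arr y x -> False).

Definition perp {T : Type} (arr : T -> T -> Prop) (x y : T) : Prop :=
  ~ arr x y /\ ~ arr y x.

Definition complete_multipartite {T : Type} (arr : T -> T -> Prop) : Prop :=
  (forall x, perp arr x x) /\
  (forall x y, perp arr x y -> perp arr y x) /\
  (forall x y z, perp arr x y -> perp arr y z -> perp arr x z).

Definition antichain {T : Type} (arr : T -> T -> Prop) (A : T -> Prop) : Prop :=
  forall x y, A x -> A y -> perp arr x y.

Definition maximal_antichain {T : Type} (arr : T -> T -> Prop) (A : T -> Prop) : Prop :=
  antichain arr A /\
  (forall B : T -> Prop, antichain arr B -> (forall x, A x -> B x) -> forall x, B x -> A x).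

Definition ind (P : Prop) : nat :=
  if excluded_middle_informative P then 1 else 0.

Definition parity_property {T : Type} (arr : T -> T -> Prop) : Prop :=
  forall A B : T -> Prop,
    maximal_antichain arr A -> maximal_antichain arr B ->
    (exists z, A z /\ ~ B z) \/ (exists z, B z /\ ~ A z) ->  (* A <> B *)
    forall a a' b b', A a -> A a' -> a <> a' -> B b -> B b' -> b <> b' ->
      Nat.Even (ind (arr a b) + ind (arr a b') + ind (arr a' b) + ind (arr a' b')).

(* Fix a0 in A and b0 in B. For x in A and y in B the parity property, applied to
   the square {x, a0} x {y, b0}, says that whether x -> y is decided by the three
   edges x -> b0, a0 -> y and a0 -> b0.  Hence one can take
   R = {x in A | x -> b0 iff a0 -> b0} and S = {y in B | a0 -> y}. *)

From Stdlib Require Import Classical ClassicalEpsilon Arith Lia.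

Lemma ind_cases (P : Prop) : (P /\ ind P = 1) \/ (~ P /\ ind P = 0).
Proof.
  unfold ind; destruct (excluded_middle_informative P) as [hP | hP]; tauto.
Qed.

Lemma even_ind4_iff (P Q R S : Prop) :
  Nat.Even (ind P + ind Q + ind R + ind S) -> (P <-> (Q <-> (R <-> S))).
Proof.
  destruct (ind_cases P) as [[hP ->] | [hP ->]];
  destruct (ind_cases Q) as [[hQ ->] | [hQ ->]];
  destruct (ind_cases R) as [[hR ->] | [hR ->]];
  destruct (ind_cases S) as [[hS ->] | [hS ->]];
  intro heven; apply Nat.even_spec in heven; simpl in heven;
  first [discriminate | tauto].
Qed.

Section Switching.

Variables (T : Type) (r : T -> T -> Prop) (A B : T -> Prop).

Hypothesis four_point_even : forall a a' b b',
  A a -> A a' -> a <> a' -> B b -> B b' -> b <> b' ->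
  Nat.Even (ind (r a b) + ind (r a b') + ind (r a' b) + ind (r a' b')).

(* Degenerate squares contribute every indicator an even number of times. *)
Lemma four_point_even_all a a' b b' :
  A a -> A a' -> B b -> B b' ->
  Nat.Even (ind (r a b) + ind (r a b') + ind (r a' b) + ind (r a' b')).
Proof.
  intros Aa Aa' Bb Bb'.
  destruct (classic (a = a')) as [<- | ne_a].
  { exists (ind (r a b) + ind (r a b')); lia. }
  destruct (classic (b = b')) as [<- | ne_b].
  { exists (ind (r a b) + ind (r a' b)); lia. }
  auto.
Qed.

Lemma switching_sets : exists R S : T -> Prop,
  (forall x, R x -> A x) /\ (forall y, S y -> B y) /\
  (forall x y, A x -> B y -> (r x y <-> (R x <-> S y))).
Proof.
  destruct (classic (exists a0 b0, A a0 /\ B b0)) as [[a0 [b0 [Aa0 Bb0]]] | empty].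
  - exists (fun x => A x /\ (r x b0 <-> r a0 b0)), (fun y => B y /\ r a0 y).
    split; [tauto | split; [tauto |]].
    intros x y Ax By.
    pose proof (even_ind4_iff _ _ _ _ (four_point_even_all x a0 y b0 Ax Aa0 By Bb0)).
    tauto.
  - exists (fun _ => False), (fun _ => False).
    split; [tauto | split; [tauto |]].
    intros x y Ax By; exfalso; eauto.
Qed.

End Switching.

Theorem lemma4p1 (T : Type) (arr : T -> T -> Prop)
  (Hd : is_digraph arr) (Hcm : complete_multipartite arr) (Hp : parity_property arr)
  (A B : T -> Prop) (HA : maximal_antichain arr A) (HB : maximal_antichain arr B)
  (HAB : (exists z, A z /\ ~ B z) \/ (exists z, B z /\ ~ A z)) :
  exists (R S : T -> Prop),
    (forall x, R x -> A x) /\ (forall y, S y -> B y) /\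
    (forall x y, A x -> B y -> (arr x y <-> (R x <-> S y))).
Proof.
  apply switching_sets.
  exact (Hp A B HA HB HAB).
Qed.
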